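(* Let $G$ and $H$ be connected graphs of order at least two such that neither $G$ nor $H$ is a complete graph. Suppose $\textnormal{diam}(G\diamond H)=3$, neither $G$ nor $H$ has a pair of distinct adjacent twins, $G$ has neither a universal vertex nor a $\gamma_G$-pair, and $H$ has a $\gamma_H$-pair. (a) If $V(H)\setminus\mathbb{P}(H)=\{h^*\}$ for a single vertex $h^*$, then $(G\diamond H)_{\rm SR}\cong \overline{G}\cup\frac{|V(G)|(|V(H)|-1)}{2}K_2$. (b) If $V(H)=\mathbb{P}(H)$, then $(G\diamond H)_{\rm SR}\cong\frac{|V(G)||V(H)|}{2}K_2$.
   Context: All graphs are finite, simple and undirected; $d(x,y)$ is the shortest-path distance; $\overline{X}$ denotes the complement of $X$; $kK_2$ is the disjoint union of $k$ copies of $K_2$ and $\cup$ denotes disjoint union; $N_X[x]=N_X(x)\cup\{x\}$. A universal vertex of $X$ is a vertex adjacent to all other vertices. Distinct vertices $u,w$ are adjacent twins if $N[u]=N[w]$. A set $D$ is a dominating set of $X$ if $\bigcup_{x\in D}N[x]=V(X)$. A pair $\{u,w\}$ is a $\gamma_X$-pair if $\{u,w\}$ is a minimum dominating set of $X$ with $N_X[u]\cap N_X[w]=\emptyset$ and $N_X[u]\cup N_X[w]=V(X)$; $\mathbb{P}(X)$ is the set of vertices of $X$ belonging to some $\gamma_X$-pair. The modular product $G\diamond H$ has vertex set $V(G)\times V(H)$, and $(g,h)$, $(g',h')$ are adjacent iff one of the following holds: ($g=g'$ and $hh'\in E(H)$), or ($h=h'$ and $gg'\in E(G)$), or ($gg'\in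 E(G)$ and $hh'\in E(H)$), or ($gg'\in E(\overline{G})$ and $hh'\in E(\overline{H})$). A vertex $u$ is maximally distant from $v$ if $d(u,v)\ge d(w,v)$ for every neighbor $w$ of $u$; $u,v$ are mutually maximally distant (MMD) if each is maximally distant from the other. For a connected graph $X$, the strong resolving graph $X_{\rm SR}$ has vertex set $\{x\in V(X): x\text{ is MMD with some }y\}$ and edges exactly the MMD pairs of $X$. *)

From mathcomp Require Import all_boot.
Set Implicit Arguments. Unset Strict Implicit. Unset Printing Implicit Defensive.

Record sgraph := SGraph {
  vert : finType;
  adj : rel vert;
  adj_sym : symmetric adj;
  adj_irr : irreflexive adj }.

Section Basic.
Variable X : sgraph.
Implicit Types x y u w : vert X.

Definition connected_graph : Prop := forall x y, connect (@adj X) x y.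
Definition complete_graph : Prop := forall x y, x != y -> adj x y.
Definition gorder := #|vert X|.

Definition cnbhd x : {set vert X} := [set y | (y == x) || adj x y].

Fixpoint ball x (n : nat) : {set vert X} :=
  if n is m.+1 then ball x m :|: [set y | [exists z in ball x m, adj z y]]
  else [set x].

(* shortest-path distance: least n with y within n steps of x
   (equals #|vert X| if y is unreachable; irrelevant for connected graphs) *)
Definition dist x y : nat := find (fun n => y \in ball x n) (iota 0 #|vert X|).

Definition diam : nat := \max_(p : vert X * vert X) dist p.1 p.2.

Definition universal x : Prop := forall y, y != x -> adj x y.
Definition adj_twins u w : bool := (u != w) && (cnbhd u == cnbhd w).
Definition has_adj_twins : Prop := exists u w, adj_twins u w.

Definition dominating (D : {set vert X}) : bool :=
  \bigcup_(x in D) cnbhd x == [set: vert X].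
Definition gamma : nat := \big[minn/#|vert X|]_(D : {set vert X} | dominating D) #|D|.

Definition gamma_pair u w : bool :=
  [&& u != w, dominating [set u; w], #|[set u; w]| == gamma,
      cnbhd u :&: cnbhd w == set0 & cnbhd u :|: cnbhd w == [set: vert X]].
Definition has_gamma_pair : Prop := exists u w, gamma_pair u w.
Definition Pset : {set vert X} := [set x | [exists y, gamma_pair x y]].

Definition max_distant u v : bool := [forall w, adj u w ==> (dist w v <= dist u v)].
Definition mmd u v : bool := max_distant u v && max_distant v u.
End Basic.

Definition cadj (X : sgraph) : rel (vert X) := fun x y => (x != y) && ~~ adj x y.
Lemma cadj_sym X : symmetric (@cadj X).
Proof. by move=> x y; rewrite /cadj eq_sym adj_sym. Qed.
Lemma cadj_irr X : irreflexive (@cadj X).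
Proof. by move=> x; rewrite /cadj eqxx. Qed.
Definition compl (X : sgraph) : sgraph := SGraph (@cadj_sym X) (@cadj_irr X).

Definition madj (G H : sgraph) : rel (vert G * vert H) := fun x y =>
  [|| (x.1 == y.1) && adj x.2 y.2, (x.2 == y.2) && adj x.1 y.1,
      adj x.1 y.1 && adj x.2 y.2 | cadj x.1 y.1 && cadj x.2 y.2].
Lemma madj_sym G H : symmetric (@madj G H).
Proof.
move=> x y; rewrite /madj (eq_sym x.1) (eq_sym x.2) (adj_sym x.1) (adj_sym x.2).
by rewrite (cadj_sym x.1) (cadj_sym x.2).
Qed.
Lemma madj_irr G H : irreflexive (@madj G H).
Proof. by move=> x; rewrite /madj !adj_irr (cadj_irr x.1) !andbF. Qed.
Definition mprod (G H : sgraph) : sgraph := SGraph (@madj_sym G H) (@madj_irr G H).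

Definition sr_vert (X : sgraph) := {x : vert X | [exists y, mmd x y]}.
Definition sradj (X : sgraph) : rel (sr_vert X) := fun x y =>
  (val x != val y) && mmd (val x) (val y).
Lemma sradj_sym X : symmetric (@sradj X).
Proof. by move=> x y; rewrite /sradj eq_sym /mmd [max_distant (val y) _ && _]andbC. Qed.
Lemma sradj_irr X : irreflexive (@sradj X).
Proof. by move=> x; rewrite /sradj eqxx. Qed.
Definition SR (X : sgraph) : sgraph := SGraph (@sradj_sym X) (@sradj_irr X).

Definition uadj (X Y : sgraph) : rel (vert X + vert Y) := fun x y =>
  match x, y with
  | inl a, inl b => adj a b
  | inr a, inr b => adj a b
  | _, _ => false end.
Lemma uadj_sym X Y : symmetric (@uadj X Y).
Proof. by case=> a [] b //=; rewrite adj_sym. Qed.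
Lemma uadj_irr X Y : irreflexive (@uadj X Y).
Proof. by case=> a /=; rewrite adj_irr. Qed.
Definition dunion (X Y : sgraph) : sgraph := SGraph (@uadj_sym X Y) (@uadj_irr X Y).

Definition kadj (k : nat) : rel ('I_k * bool) := fun x y =>
  (x.1 == y.1) && (x.2 != y.2).
Lemma kadj_sym k : symmetric (@kadj k).
Proof. by move=> x y; rewrite /kadj eq_sym (eq_sym x.2). Qed.
Lemma kadj_irr k : irreflexive (@kadj k).
Proof. by move=> x; rewrite /kadj !eqxx. Qed.
Definition kK2 (k : nat) : sgraph := SGraph (@kadj_sym k) (@kadj_irr k).

Definition isomorphic (X Y : sgraph) : Prop :=
  exists f : vert X -> vert Y, bijective f /\ forall x y, adj (f x) (f y) = adj x y.

From mathcomp Require Import all_boot all_order.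
Set Implicit Arguments. Unset Strict Implicit. Unset Printing Implicit Defensive.

(* In the modular product M = G ⋄ H closed neighbourhoods satisfy
     (g, h) ∈ N[(g', h')]  ⟺  (g ∈ N[g'] ⟺ h ∈ N[h']),
   so z = (x, y) is a common closed neighbour of u and v iff x sees u.1, v.1 exactly as
   y sees u.2, v.2.  Using that G has no γ-pair and no universal vertex and that both
   factors are twin-free, such a z exists unless u.1 = v.1 and {u.2, v.2} is a γ_H-pair,
   whose closed neighbourhoods are complementary.  These "antipodal" pairs are therefore
   exactly the pairs at distance 3, and M is twin-free as well.  Hence adjacent vertices are
   never MMD, antipodal ones always are, and two vertices at distance 2 are MMD iff neither
   H-coordinate lies in P(H): otherwise the antipode of one of them is a neighbour of the other
   at distance 3 from it.  Every vertex is MMD with some vertex, and (G ⋄ H)_SR is the perfect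
   matching of antipodal pairs on V(G) × P(H) together with the non-adjacent pairs of
   V(G) × (V(H) \ P(H)); when V(H) \ P(H) = {h*} the latter form a copy of the complement of G. *)

Section ClosedNeighbourhoods.
Variable X : sgraph.
Implicit Types x y z : vert X.

Definition cnb x y := (y == x) || adj x y.

Lemma in_cnbhd x y : (y \in cnbhd x) = cnb x y.
Proof. by rewrite inE. Qed.

Lemma cnbxx x : cnb x x.
Proof. by rewrite /cnb eqxx. Qed.

Lemma cnbC x y : cnb x y = cnb y x.
Proof. by rewrite /cnb eq_sym adj_sym. Qed.

Lemma adjE x y : adj x y = (x != y) && cnb x y.
Proof. by rewrite /cnb eq_sym; case: eqVneq => [->|_]; rewrite ?adj_irr. Qed.

Lemma adj_cnb x y : adj x y -> cnb x y.
Proof. by rewrite adjE => /andP []. Qed.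

Lemma adj_neq x y : adj x y -> x != y.
Proof. by rewrite adjE => /andP []. Qed.

Lemma cadjE x y : cadj x y = ~~ cnb x y.
Proof. by rewrite /cadj /cnb negb_or eq_sym. Qed.

Lemma ball_mono x : {homo ball x : m n / m <= n >-> m \subset n}.
Proof.
move=> m n; elim: n => [|n IHn]; first by rewrite leqn0 => /eqP ->.
rewrite leq_eqVlt => /predU1P [-> //|/IHn sub_mn].
exact: subset_trans sub_mn (subsetUl _ _).
Qed.

Lemma dist_le x y n : n < #|vert X| -> (dist x y <= n) = (y \in ball x n).
Proof.
move=> n_lt; rewrite /dist; set P := fun n => y \in ball x n.
apply/idP/idP => [le_dn|yn].
  have hasP : has P (iota 0 #|vert X|).
    by apply: contraTT le_dn => /hasNfind ->; rewrite size_iota -ltnNge.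
  have := hasP; rewrite has_find size_iota => lt_find.
  have := nth_find 0 hasP; rewrite nth_iota // add0n.
  exact/subsetP/ball_mono.
rewrite leqNgt; apply/negP => lt_nd.
by have := before_find 0 lt_nd; rewrite nth_iota // /P yn.
Qed.

Lemma in_ball1 x y : (y \in ball x 1) = cnb x y.
Proof.
rewrite !inE /cnb; congr (_ || _); apply/exists_inP/idP => [[z]|xy].
  by rewrite inE => /eqP ->.
by exists x; rewrite ?inE.
Qed.

Lemma in_ball2 x y : (y \in ball x 2) = [exists z, cnb x z && cnb z y].
Proof.
rewrite -[ball x 2]/(ball x 1 :|: [set y | [exists z in ball x 1, adj z y]]).
rewrite in_setU in_ball1 inE.
apply/orP/existsP => [[xy|/exists_inP [z]]|[z /andP [xz]]].
- by exists y; rewrite xy cnbxx.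
- by rewrite in_ball1 => xz zy; exists z; rewrite xz /cnb zy orbT.
- rewrite /cnb => /orP [/eqP -> | zy]; first by left.
  by right; apply/exists_inP; exists z; rewrite ?in_ball1.
Qed.

Lemma dist_le1 x y : 1 < #|vert X| -> (dist x y <= 1) = cnb x y.
Proof. by move=> X2; rewrite dist_le ?in_ball1. Qed.

Lemma mmdC x y : mmd x y = mmd y x.
Proof. by rewrite /mmd andbC. Qed.

Lemma twin_freeP :
  ~ has_adj_twins X <-> forall x y, x != y -> exists z, cnb y z = ~~ cnb x z.
Proof.
split=> [twin_free x y xy | sep [x [y /andP [xy /eqP cnbhd_xy]]]]; last first.
  have [z] := sep x y xy.
  by rewrite -!in_cnbhd cnbhd_xy; case: (z \in cnbhd y).
have [z sep|same] := pickP (fun z => cnb y z != cnb x z).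
  by exists z; move: sep; case: (cnb x z); case: (cnb y z).
case: twin_free; exists x, y; rewrite /adj_twins xy; apply/eqP/setP => z.
by rewrite !in_cnbhd; move/negbFE/eqP: (same z).
Qed.

Lemma cnb_onto : ~ (exists x, universal x) -> forall x b, exists z, cnb x z = b.
Proof.
move=> nu x [|]; first by exists x; rewrite cnbxx.
have [y /negbTE|all_nb] := pickP (fun y => ~~ cnb x y); first by exists y.
case: nu; exists x => y yx.
by move/negbFE: (all_nb y); rewrite /cnb (negbTE yx).
Qed.

Lemma cnb_split x y : ~~ cnb x y -> forall b, exists z, cnb x z = b /\ cnb y z = ~~ b.
Proof. by move=> nxy [|]; [exists x | exists y]; rewrite cnbxx ?(cnbC y) (negbTE nxy). Qed.

Lemma adj_not_mmd x y : ~ has_adj_twins X -> 1 < #|vert X| -> adj x y -> ~~ mmd x y.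
Proof.
(* A vertex of N[x] \ N[y] is a neighbour of x at distance 2 from y. *)
move=> twin_free X2 xy; have [z ez] := twin_freeP.1 twin_free x y (adj_neq xy).
wlog xz : x y xy ez / cnb x z.
  move=> hw; have [|nxz] := boolP (cnb x z); first exact: hw.
  by rewrite mmdC; apply: hw; rewrite 1?adj_sym // ez ?negbK.
rewrite /mmd negb_and; apply/orP; left; apply/forallPn; exists z.
rewrite negb_imply -ltnNge adjE xz andbT; apply/andP; split.
  by apply/eqP => xz'; move: ez; rewrite -xz' cnbC (adj_cnb xy) cnbxx.
by rewrite (@leq_ltn_trans 1) ?dist_le1 ?(adj_cnb xy) // ltnNge dist_le1 // cnbC ez xz.
Qed.

End ClosedNeighbourhoods.

Section GammaPairs.
Variable X : sgraph.
Implicit Types (x y u w : vert X) (D : {set vert X}).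

Lemma dominatingP D : reflect (forall y, exists2 x, x \in D & cnb x y) (dominating D).
Proof.
apply: (iffP eqP) => [domD y | domD].
  have /bigcupP [x xD xy] : y \in \bigcup_(x in D) cnbhd x by rewrite domD inE.
  by exists x; rewrite -?in_cnbhd.
apply/setP => y; rewrite inE; have [x xD xy] := domD y.
by apply/bigcupP; exists x; rewrite ?in_cnbhd.
Qed.

Lemma gamma_le D : dominating D -> gamma X <= #|D|.
Proof. exact: (@Order.TotalTheory.bigmin_le_cond _ nat _ #|vert X| D _ (fun D => #|D|)). Qed.

Lemma gamma_gt1 : 1 < #|vert X| -> ~ (exists x, universal x) -> 1 < gamma X.
Proof.
move=> X2 nu; apply: (big_ind (fun m => 1 < m)) => // [m n|D /dominatingP domD].
  by rewrite leq_min => ->.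
rewrite ltnNge; apply/negP => /card_le1_eqP D1.
have [y _] := card_gt0P (ltnW X2); have [x xD _] := domD y.
case: nu; exists x => z zx; have [x' x'D x'z] := domD z.
by move: x'z; rewrite /cnb (D1 x x') // in zx *; rewrite (negbTE zx).
Qed.

Lemma cnb_compl_no_universal u w :
  (forall y, cnb w y = ~~ cnb u y) -> ~ (exists x, universal x).
Proof.
move=> compl [x ux]; have cnbx y : cnb x y by rewrite /cnb; case: eqVneq => // /ux.
by move: (compl x); rewrite cnbC (cnbC u) !cnbx.
Qed.

Lemma gamma_pairP u w : reflect (forall y, cnb w y = ~~ cnb u y) (gamma_pair u w).
Proof.
apply: (iffP and5P) => [[_ _ _ /eqP capE /eqP cupE] y | compl].
  move/setP: capE => /(_ y); move/setP: cupE => /(_ y).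
  by rewrite in_setI in_setU !in_cnbhd !inE; case: (cnb u y); case: (cnb w y).
have uw : u != w by apply/eqP => wu; move: (compl u); rewrite wu cnbxx.
have dom : dominating [set u; w].
  apply/dominatingP => y; have [uy|nuy] := boolP (cnb u y).
    by exists u; rewrite ?inE ?eqxx.
  by exists w; rewrite ?inE ?eqxx ?orbT // compl nuy.
have gamma2 : gamma X = 2.
  apply/eqP; rewrite eqn_leq (leq_trans (gamma_le dom)) ?cards2 ?uw //=.
  apply: gamma_gt1; last exact: cnb_compl_no_universal compl.
  by apply/card_gt1P; exists u, w.
split; rewrite ?cards2 ?uw ?gamma2 //; apply/eqP/setP => y;
  by rewrite !inE -!/(cnb _ _) compl; case: (cnb u y).
Qed.

Lemma gamma_pairPn u w : reflect (exists y, cnb w y = cnb u y) (~~ gamma_pair u w).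
Proof.
apply: (iffP negP) => [nuw | [y same] /gamma_pairP compl]; last first.
  by move: (compl y); rewrite same; case: (cnb u y).
have [y /eqP same|compl] := pickP (fun y => cnb w y == cnb u y); first by exists y.
by case: nuw; apply/gamma_pairP => y; move/negbT: (compl y); case: (cnb u y); case: (cnb w y).
Qed.

Lemma no_gamma_pair_cnb_eq : ~ has_gamma_pair X -> forall u w, exists y, cnb w y = cnb u y.
Proof. by move=> no_gp u w; apply/gamma_pairPn/negP => uw; apply: no_gp; exists u, w. Qed.

Lemma gamma_pair_no_universal u w : gamma_pair u w -> ~ (exists x, universal x).
Proof. by move/gamma_pairP; apply: cnb_compl_no_universal. Qed.

Lemma gamma_pair_neq u w : gamma_pair u w -> u != w.
Proof. by move/gamma_pairP => compl; apply/eqP => uw; move: (compl u); rewrite uw cnbxx. Qed.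

Lemma gamma_pairC u w : gamma_pair u w = gamma_pair w u.
Proof. by apply/gamma_pairP/gamma_pairP => compl y; rewrite compl ?negbK. Qed.

Lemma gamma_pair_Pset u w : gamma_pair u w -> w \in Pset X.
Proof. by rewrite gamma_pairC inE => uw; apply/existsP; exists u. Qed.

Definition partner x := odflt x [pick y | gamma_pair x y].

Lemma gamma_pair_partner x : x \in Pset X -> gamma_pair x (partner x).
Proof.
by rewrite inE /partner => /existsP [y xy]; case: pickP => [y' //|/(_ y)]; rewrite xy.
Qed.

Hypothesis twin_free : ~ has_adj_twins X.

Lemma gamma_pairE x y : x \in Pset X -> gamma_pair x y = (y == partner x).
Proof.
move=> /gamma_pair_partner /gamma_pairP xp; apply/gamma_pairP/eqP => [xy|-> //].
apply/eqP/negPn/negP => /((twin_freeP _).1 twin_free) [z].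
by rewrite xp xy negbK; case: (cnb x z).
Qed.

Lemma partnerK : {in Pset X, involutive partner}.
Proof.
move=> x xP; have xp := gamma_pair_partner xP.
by apply/esym/eqP; rewrite -gamma_pairE 1?gamma_pairC // (gamma_pair_Pset xp).
Qed.

End GammaPairs.

Section PerfectMatchingCode.
Variables (T : finType) (B : {pred T}) (s : T -> T).
Hypotheses (sB : {in B, forall x, s x \in B}) (sK : {in B, involutive s})
  (s_neq : {in B, forall x, s x != x}).

Let R := [set x in B | enum_rank x < enum_rank (s x)].
Let rep x := if x \in R then x else s x.

Let R_sub : {subset R <= B}.
Proof. by move=> x; rewrite inE => /andP []. Qed.

Let mem_R_s x : x \in B -> (s x \in R) = (x \notin R).
Proof.
move=> Bx; rewrite !inE sB // Bx sK //=.
have : val (enum_rank (s x)) != val (enum_rank x) by rewrite val_eqE (inj_eq enum_rank_inj) s_neq.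
by case: ltngtP.
Qed.

Let rep_R x : x \in B -> rep x \in R.
Proof. by move=> Bx; rewrite /rep; case: ifPn => // xR; rewrite mem_R_s. Qed.

Let card_B : #|B| = #|R|.*2.
Proof.
have s_inj : {in R &, injective s}.
  by move=> x y /R_sub Bx /R_sub By /(congr1 s); rewrite !sK.
rewrite -addnn -{2}(card_in_imset s_inj) -cardsE -(cardsID R).
have -> : [set x in B] :&: R = R by apply/setIidPr/subsetP => x /R_sub; rewrite inE.
congr (_ + _); apply: eq_card => x; rewrite in_setD [x \in [set y in B]]inE.
apply/andP/imsetP => [[xR Bx]|[y yR ->]]; first by exists (s x); rewrite ?sK // mem_R_s.
by have By := R_sub yR; rewrite mem_R_s // yR sB.
Qed.

Lemma perfect_matching_code x0 : x0 \in B ->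
  exists k (c : T -> 'I_k * bool), [/\ #|B| = k.*2, {in B &, injective c} &
    {in B &, forall x y, kadj (c x) (c y) = (y == s x)}].
Proof.
move=> Bx0; pose code := enum_rank_in (rep_R Bx0).
have code_eq x y : x \in B -> y \in B -> (code (rep x) == code (rep y)) = (rep x == rep y).
  by move=> Bx By; apply/eqP/eqP => [/(enum_rank_in_inj (rep_R Bx) (rep_R By))|->].
exists #|R|, (fun x => (code (rep x), x \in R)); split => // [x y Bx By [] | x y Bx By].
  move/eqP; rewrite code_eq // /rep => + eR; rewrite eR.
  by case: (y \in R) => /eqP // /(congr1 s); rewrite !sK.
rewrite /kadj /= code_eq // /rep.
have [xR|xR] := boolP (x \in R); have [yR|yR] := boolP (y \in R);
  rewrite /= ?andbT ?andbF.
- by apply/esym/negbTE; apply: contraTneq yR => ->; rewrite mem_R_s // xR.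
- by apply/eqP/eqP => ->; rewrite sK.
- exact: eq_sym.
- by apply/esym/negbTE; apply: contraNneq yR => ->; rewrite mem_R_s // xR.
Qed.

End PerfectMatchingCode.

Lemma isomorphic_SR (X Y : sgraph) (f : vert X -> vert Y) :
  (forall x : vert X, [exists y, mmd x y]) -> injective f -> #|vert Y| <= #|vert X| ->
  (forall x y, adj (f x) (f y) = (x != y) && mmd x y) -> isomorphic (SR X) Y.
Proof.
move=> mmdX f_inj leYX f_adj; exists (f \o val); split; last by move=> x y; rewrite /= f_adj.
apply: inj_card_bij => [x y /f_inj /val_inj //|].
by rewrite card_sig (eq_card (B := predT) mmdX).
Qed.

Section ModularProduct.
Variables G H : sgraph.
Notation M := (mprod G H).
Implicit Types u v w z : vert M.

Lemma cnb_mprod u v : cnb u v = (cnb u.1 v.1 == cnb u.2 v.2).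
Proof.
case: u v => [g h] [g' h']; rewrite /cnb /= /madj !cadjE /cnb xpair_eqE /=.
case: (eqVneq g' g) => [->|gg']; case: (eqVneq h' h) => [->|hh'];
  rewrite ?adj_irr ?eqxx //= ?andbF ?orbF.
all: by case: (adj g g'); case: (adj h h').
Qed.

Definition antipodal u v := (u.1 == v.1) && gamma_pair u.2 v.2.

Lemma antipodalC u v : antipodal u v = antipodal v u.
Proof. by rewrite /antipodal eq_sym gamma_pairC. Qed.

Lemma antipodal_Pset u v : antipodal u v -> (u.2 \in Pset H) && (v.2 \in Pset H).
Proof.
by case/andP => _ uv; rewrite (gamma_pair_Pset uv) (gamma_pair_Pset (etrans (gamma_pairC _ _) uv)).
Qed.

Lemma antipodal_neq u v : antipodal u v -> u != v.
Proof. by case/andP => _ /gamma_pair_neq; apply: contraNneq => ->. Qed.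

Lemma cnb_antipodal u w v : antipodal u w -> cnb w v = ~~ cnb u v.
Proof.
case/andP => /eqP uw1 /gamma_pairP compl.
by rewrite !cnb_mprod -uw1 compl; case: cnb; case: cnb.
Qed.

Hypotheses (twin_freeG : ~ has_adj_twins G) (twin_freeH : ~ has_adj_twins H).
Hypotheses (no_univG : ~ (exists g : vert G, universal g)) (no_gpG : ~ has_gamma_pair G).
Hypothesis gpH : has_gamma_pair H.

Let no_univH : ~ (exists h : vert H, universal h).
Proof. by case: gpH => a [b /gamma_pair_no_universal]. Qed.

Lemma mprod_twin_free : ~ has_adj_twins M.
Proof.
apply/twin_freeP => -[g h] [g' h'] uv.
have [|nuv] := boolP (cnb ((g, h) : vert M) (g', h')); last first.
  by exists (g, h); rewrite cnbxx cnbC (negbTE nuv).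
rewrite cnb_mprod /= => /eqP cnb_gh.
have [eg|gg'] := eqVneq g g'.
  have hh' : h != h' by apply: contraNneq uv => eh; rewrite eg eh.
  have [y ey] := (twin_freeP _).1 twin_freeH h h' hh'.
  by exists (g, y); rewrite !cnb_mprod /= -eg cnbxx ey.
have [x ex] : exists x, cnb g' x = (cnb g x != cnb g g').
  have [gg|ngg] := boolP (cnb g g').
    by have [x ex] := (twin_freeP _).1 twin_freeG g g' gg'; exists x; rewrite ex; case: cnb.
  by have [x ex] := no_gamma_pair_cnb_eq no_gpG g g'; exists x; rewrite ex; case: cnb.
by exists (x, h); rewrite !cnb_mprod /= cnbxx ex (cnbC h') -cnb_gh; case: cnb; case: cnb.
Qed.

Lemma exists_common_cnb_mprod u v : ~~ antipodal u v -> exists z, cnb u z && cnb z v.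
Proof.
case: u v => [g h] [g' h'] not_uv.
have [|nuv] := boolP (cnb ((g, h) : vert M) (g', h')); first by exists (g, h); rewrite cnbxx.
suff [x [y [ex ey]]] : exists x y, cnb h y = cnb g x /\ cnb h' y = cnb g' x.
  by exists (x, y); rewrite !cnb_mprod /= ex (cnbC x) (cnbC y) ey !eqxx.
have [eg|gg'] := eqVneq g g'.
  have /gamma_pairPn [y ey] : ~~ gamma_pair h h' by rewrite /antipodal /= eg eqxx in not_uv.
  by have [x ex] := cnb_onto no_univG g (cnb h y); exists x, y; rewrite ey -ex eg.
have [eh|hh'] := eqVneq h h'.
  have [x ex] := no_gamma_pair_cnb_eq no_gpG g g'.
  by have [y ey] := cnb_onto no_univH h (cnb g x); exists x, y; rewrite -eh ey ex.
rewrite cnb_mprod /= in nuv; have [hh|nhh] := boolP (cnb h h').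
  have ngg : ~~ cnb g g' by move: nuv; rewrite hh; case: cnb.
  have [y ey] := (twin_freeP _).1 twin_freeH h h' hh'.
  by have [x [ex ex']] := cnb_split ngg (cnb h y); exists x, y; rewrite ex ex' ey.
have [x ex] := (twin_freeP _).1 twin_freeG g g' gg'.
by have [y [ey ey']] := cnb_split nhh (cnb g x); exists x, y; rewrite ey ey' ex.
Qed.

Lemma in_ball2_mprod u v : (v \in ball u 2) = ~~ antipodal u v.
Proof.
rewrite in_ball2; apply/existsP/idP => [[z]|/exists_common_cnb_mprod [z]]; last by exists z.
rewrite !cnb_mprod => /andP [/eqP e1 /eqP e2]; apply/negP => /andP [/eqP e /gamma_pairP compl].
by move: (compl z.2); rewrite cnbC -e2 cnbC -e e1; case: cnb.
Qed.

Hypotheses (G2 : 1 < #|vert G|) (H2 : 1 < #|vert H|) (diamM : diam M = 3).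

Let card_mprod_gt3 : 3 < #|vert M|.
Proof. by rewrite card_prod (leq_mul G2 H2). Qed.

Let card_mprod_gt1 : 1 < #|vert M| := ltnW (ltnW card_mprod_gt3).

Lemma dist_le2_mprod u v : (dist u v <= 2) = ~~ antipodal u v.
Proof. by rewrite dist_le ?in_ball2_mprod // ltnW. Qed.

Lemma dist_le3_mprod u v : dist u v <= 3.
Proof.
by rewrite -diamM; apply: (@leq_bigmax _ (fun p : vert M * vert M => dist p.1 p.2) (u, v)).
Qed.

Lemma max_distant_antipodal u v : antipodal u v -> max_distant u v.
Proof.
move=> uv; apply/forallP => w; apply/implyP => _; apply: leq_trans (dist_le3_mprod w v) _.
by rewrite leqNgt ltnS dist_le2_mprod uv.
Qed.

Lemma max_distant_mprod u v : ~~ cnb u v -> ~~ antipodal u v ->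
  max_distant u v = (v.2 \notin Pset H).
Proof.
move=> nuv not_uv; have du : 2 <= dist u v by rewrite ltnNge dist_le1.
apply/forallP/idP => [md_uv | vP w]; last first.
  apply/implyP => _; apply: leq_trans du; rewrite dist_le2_mprod.
  by apply: contra vP => /antipodal_Pset /andP [].
apply/negP => /gamma_pair_partner vp; set w := (v.1, partner v.2).
have vw : antipodal v w by rewrite /antipodal eqxx.
have uw : adj u w.
  rewrite adjE cnbC (cnb_antipodal u vw) cnbC nuv andbT.
  by apply: contraNneq not_uv => ->; rewrite antipodalC.
have := implyP (md_uv w) uw; apply/negP; rewrite -ltnNge.
by rewrite (@leq_ltn_trans 2) ?dist_le2_mprod // ltnNge dist_le2_mprod antipodalC vw.
Qed.

Lemma mmd_mprodE u v : (u != v) && mmd u v =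
  antipodal u v || [&& ~~ cnb u v, u.2 \notin Pset H & v.2 \notin Pset H].
Proof.
have [uv|not_uv] := boolP (antipodal u v).
  by rewrite antipodal_neq // /mmd !max_distant_antipodal // antipodalC.
have [uv|nuv] := boolP (cnb u v).
  rewrite /=; have [-> //|u_v] := eqVneq u v.
  apply/negbTE/adj_not_mmd; [exact: mprod_twin_free | exact: card_mprod_gt1 | ].
  by rewrite adjE u_v.
have u_v : u != v by apply: contraNneq nuv => ->; apply: cnbxx.
have nvu : ~~ cnb v u by rewrite cnbC.
have not_vu : ~~ antipodal v u by rewrite antipodalC.
by rewrite u_v /mmd !max_distant_mprod //= andbC.
Qed.

Lemma mmd_mprod_exists u : [exists v, mmd u v].
Proof.
suff [v] : exists v, antipodal u v || [&& ~~ cnb u v, u.2 \notin Pset H & v.2 \notin Pset H].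
  by rewrite -mmd_mprodE => /andP [_ uv]; apply/existsP; exists v.
have [uP|uP] := boolP (u.2 \in Pset H).
  by exists (u.1, partner u.2); rewrite /antipodal eqxx gamma_pair_partner.
have [x ex] := cnb_onto no_univG u.1 false.
by exists (x, u.2); apply/orP; right; rewrite cnb_mprod ex cnbxx uP.
Qed.

Definition Pset_mprod : {pred vert M} := [pred u | u.2 \in Pset H].

Lemma antipodalE u v : u.2 \in Pset H -> antipodal u v = (v == (u.1, partner u.2)).
Proof. by move=> uP; case: v => g h; rewrite /antipodal gamma_pairE // xpair_eqE eq_sym. Qed.

Lemma antipodal_code : exists k (c : vert M -> 'I_k * bool),
  [/\ #|Pset_mprod| = k.*2, {in Pset_mprod &, injective c} &
       {in Pset_mprod &, forall u v, kadj (c u) (c v) = antipodal u v}].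
Proof.
have [a [b ab]] := gpH; have [g _] := card_gt0P (ltnW G2).
have gaP : (g, a) \in Pset_mprod by apply: gamma_pair_Pset (etrans (gamma_pairC _ _) ab).
have [u uP|u uP|u uP|k [c [cardP c_inj c_adj]]] :=
  @perfect_matching_code _ Pset_mprod (fun u => (u.1, partner u.2)) _ _ _ _ gaP.
- exact: gamma_pair_Pset (gamma_pair_partner uP).
- by rewrite /= partnerK //; case: u uP.
- case: u uP => x h hP; rewrite /= xpair_eqE eqxx /=.
  by apply: gamma_pair_neq; rewrite gamma_pairC gamma_pair_partner.
by exists k, c; split=> // u v uP vP; rewrite c_adj // antipodalE.
Qed.

Lemma SR_mprod_Pset_setT : Pset H = [set: vert H] ->
  isomorphic (SR M) (kK2 ((gorder G * gorder H) %/ 2)).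
Proof.
move=> PH; have in_Pset h : h \in Pset H by rewrite PH inE.
have in_Pset_mprod u : u \in Pset_mprod := in_Pset u.2.
have [k [c [cardP c_inj c_adj]]] := antipodal_code.
have cardM : #|vert G| * #|vert H| = k.*2.
  by rewrite -cardP -card_prod; apply: eq_card => u; rewrite in_Pset_mprod.
rewrite /gorder cardM -muln2 mulnK //; apply: (isomorphic_SR mmd_mprod_exists).
- by move=> u v; apply: c_inj.
- by rewrite card_prod card_ord card_bool muln2 -cardM card_prod.
by move=> u v; rewrite mmd_mprodE !in_Pset /= !andbF orbF c_adj.
Qed.

Lemma SR_mprod_Pset_setC1 hs : ~: Pset H = [set hs] ->
  isomorphic (SR M) (dunion (compl G) (kK2 ((gorder G * (gorder H - 1)) %/ 2))).
Proof.
move=> PHs; have in_Pset h : (h \in Pset H) = (h != hs).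
  by move/setP: PHs => /(_ h); rewrite !inE => <-; rewrite negbK.
have in_Pset_mprod u : (u \in Pset_mprod) = (u.2 != hs) := in_Pset u.2.
have no_antipodal u v : u.2 = hs \/ v.2 = hs -> antipodal u v = false.
  move=> uv_hs; apply/negP => /antipodal_Pset.
  by rewrite !in_Pset; case: uv_hs => ->; rewrite eqxx ?andbF.
have [k [c [cardP c_inj c_adj]]] := antipodal_code.
have cardPM : #|vert G| * (#|vert H| - 1) = k.*2.
  rewrite -cardP subn1 -(cardsC1 hs) -cardsT -cardsX; apply: eq_card => -[g h].
  by rewrite in_Pset_mprod in_setX in_setT in_setC1.
rewrite /gorder cardPM -muln2 mulnK //.
pose f u : vert (dunion (compl G) (kK2 k)) := if u.2 == hs then inl u.1 else inr (c u).
apply: (isomorphic_SR (f := f) mmd_mprod_exists).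
- move=> [g h] [g' h']; rewrite /f /=.
  case: (eqVneq h hs) => [->|hP]; case: (eqVneq h' hs) => [->|h'P] //; first by case=> ->.
  by case=> /c_inj; apply; rewrite in_Pset_mprod.
- rewrite card_sum card_prod card_ord card_bool muln2 -cardPM card_prod.
  by rewrite -{1}(muln1 #|vert G|) -mulnDr subnKC // ltnW.
move=> u v; rewrite /f mmd_mprodE !in_Pset; case: eqVneq => uh; case: eqVneq => vh /=.
- by rewrite no_antipodal /= ?cadjE ?cnb_mprod ?uh ?vh ?cnbxx ?eqb_id ?andbT //; left.
- by rewrite no_antipodal ?andbF //; left.
- by rewrite no_antipodal ?andbF //; right.
- by rewrite c_adj ?in_Pset_mprod // !andbF orbF.
Qed.

End ModularProduct.

Theorem mainTheorem19 (G H : sgraph) :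
  connected_graph G -> connected_graph H ->
  2 <= gorder G -> 2 <= gorder H ->
  ~ complete_graph G -> ~ complete_graph H ->
  diam (mprod G H) = 3 ->
  ~ has_adj_twins G -> ~ has_adj_twins H ->
  ~ (exists x : vert G, universal x) ->
  ~ has_gamma_pair G -> has_gamma_pair H ->
  (forall hstar : vert H, ~: Pset H = [set hstar] ->
     isomorphic (SR (mprod G H))
       (dunion (compl G) (kK2 ((gorder G * (gorder H - 1)) %/ 2)))) /\
  (Pset H = [set: vert H] ->
     isomorphic (SR (mprod G H)) (kK2 ((gorder G * gorder H) %/ 2))).
Proof.
move=> _ _ G2 H2 _ _ diamM twin_freeG twin_freeH no_univG no_gpG gpH.
by split=> [hs|]; [apply: SR_mprod_Pset_setC1 | apply: SR_mprod_Pset_setT].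
Qed.
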